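(* There does not exist a map $T$ assigning a real number to each observed-data law $P$ of $O=(X,A,W,Y)$ (with $A\in\{0,1\}$) such that both: (i) $T(P)=\theta_{\mathrm{ATE}}:=\mathbb{E}\{Y^{(1)}-Y^{(0)}\}$ for every observed-data law $P$ induced by a causal data-generating process satisfying the positivity condition and the confounder-model assumptions; and (ii) $T(P)=\theta_{\mathrm{NDE}}:=\mathbb{E}\{Y^{(1,W^{(0)})}-Y^{(0,W^{(0)})}\}$ for every observed-data law $P$ induced by a causal data-generating process satisfying the positivity condition, the mediator-model assumptions, and the cross-world condition.
   Context: Positivity: $0<\mathbb{P}(A=1\mid X=x,W=w)<1$ for $P$-a.e. $(x,w)$, and under the mediator model additionally $0<\mathbb{P}(A=1\mid X=x)<1$ for $P$-a.e. $x$. Confounder-model assumptions ($W$ pre-exposure, potential outcomes $Y^{(0)},Y^{(1)}$): (a) if $A=a$ then $Y=Y^{(a)}$ a.s.; (b) $Y^{(a)}\perp\!\!\!\perp A\mid(X,W)$ for $a\in\{0,1\}$. Mediator-model assumptions ($W$ post-exposure, potential mediators $W^{(a)}$, potential outcomes $Y^{(a,w)}$ with $Y^{(a)}=Y^{(a,W^{(a)})}$): (a) if $A=a$ then $W=W^{(a)}$ a.s.; (b) if $A=a,W=w$ then $Y=Y^{(a,w)}$ a.s.; (c) $(Y^{(a,w)},W^{(a')})\perp\!\!\!\perp A\mid X$ for all $a,a',w$; (d) $Y^{(a,w)}\perp\!\!\!\perp W\mid(A=a,X)$ for all $a,w$. Cross-world condition: $Y^{(a,w)}\perp\!\!\!\perp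 W^{(a')}\mid X$ for all $a,a',w$. Here $X$ are baseline covariates (possibly absent). *)

From HB Require Import structures.
From mathcomp Require Import all_boot all_order all_algebra.
From mathcomp Require Import all_classical all_reals all_analysis.
Set Implicit Arguments. Unset Strict Implicit. Unset Printing Implicit Defensive.
Import Order.TTheory GRing.Theory Num.Theory.
Local Open Scope classical_set_scope.
Local Open Scope ring_scope.

Section Defs.
Context (R : realType) (d : measure_display) (Omega : measurableType d)
  (P : probability Omega R).

(* Conditional independence of U and V given Z, under P restricted to the
   event E (E = setT gives ordinary conditional independence; E = [A = a]
   gives independence "given A = a, Z").  Characterization: for every
   measurable B there is a version g(Z) of P(U in B | Z) (values in [0,1])
   which is also a version of P(U in B | V, Z), i.e.
   E[1_E 1_B(U) 1_C(V) 1_D(Z)] = E[1_E g(Z) 1_C(V) 1_D(Z)] for all C, D. *)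
Definition cond_indep_on {dU dV dZ} {TU : measurableType dU}
  {TV : measurableType dV} {TZ : measurableType dZ}
  (E : set Omega) (U : Omega -> TU) (V : Omega -> TV) (Z : Omega -> TZ) : Prop :=
  forall B : set TU, measurable B ->
  exists g : TZ -> R, measurable_fun setT g /\ (forall z, 0 <= g z <= 1) /\
    forall (C : set TV) (D : set TZ), measurable C -> measurable D ->
      (\int[P]_w ((\1_E w * \1_B (U w) * \1_C (V w) * \1_D (Z w))%:E) =
       \int[P]_w ((\1_E w * g (Z w) * \1_C (V w) * \1_D (Z w))%:E))%E.

Definition cond_indep {dU dV dZ} {TU : measurableType dU}
  {TV : measurableType dV} {TZ : measurableType dZ}
  (U : Omega -> TU) (V : Omega -> TV) (Z : Omega -> TZ) : Prop :=
  cond_indep_on setT U V Z.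

Definition positivity {dZ} {TZ : measurableType dZ}
  (A : Omega -> bool) (Z : Omega -> TZ) : Prop :=
  exists g : TZ -> R, measurable_fun setT g /\
    (forall D : set TZ, measurable D ->
      (\int[P]_w ((\1_[set w | A w] w * \1_D (Z w))%:E) =
       \int[P]_w ((g (Z w) * \1_D (Z w))%:E))%E) /\
    {ae P, forall w, 0 < g (Z w) < 1}.

Definition law_of_obs {dx} {TX : measurableType dx}
  (Q : probability (TX * bool * R * R)%type R)
  (X : Omega -> TX) (A : Omega -> bool) (W : Omega -> R) (Y : Omega -> R) : Prop :=
  forall B : set (TX * bool * R * R)%type, measurable B ->
    Q B = P ((fun w => (X w, A w, W w, Y w)) @^-1` B).

(* Confounder model (W pre-exposure, potential outcomes Y0 = Y^(0), Y1 = Y^(1)),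
   together with positivity; integrability makes theta_ATE a real number. *)
Definition confounder_model {dx} {TX : measurableType dx}
  (X : Omega -> TX) (A : Omega -> bool) (W : Omega -> R) (Y : Omega -> R)
  (Y0 Y1 : Omega -> R) : Prop :=
  [/\ measurable_fun setT X, measurable_fun setT A, measurable_fun setT W,
      measurable_fun setT Y &
  [/\ P.-integrable setT (EFin \o Y0), P.-integrable setT (EFin \o Y1),
      positivity A (fun w => (X w, W w)),
      {ae P, forall w, Y w = if A w then Y1 w else Y0 w} &
      cond_indep Y0 A (fun w => (X w, W w)) /\
      cond_indep Y1 A (fun w => (X w, W w))]].

Definition theta_ATE (Y0 Y1 : Omega -> R) : \bar R :=
  (\int[P]_w (Y1 w - Y0 w)%:E)%E.

(* Mediator model (W post-exposure, potential mediators W0 = W^(0),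
   W1 = W^(1), potential outcomes Yaw a w = Y^(a,w)), together with
   positivity and the cross-world condition; integrability makes
   theta_NDE a real number. *)
Definition mediator_model {dx} {TX : measurableType dx}
  (X : Omega -> TX) (A : Omega -> bool) (W : Omega -> R) (Y : Omega -> R)
  (W0 W1 : Omega -> R) (Yaw : bool -> R -> Omega -> R) : Prop :=
  [/\ measurable_fun setT X, measurable_fun setT A, measurable_fun setT W,
      measurable_fun setT Y &
  [/\ measurable_fun setT W0 /\ measurable_fun setT W1,
      (forall a w, measurable_fun setT (Yaw a w)),
      P.-integrable setT (fun o => (Yaw true (W0 o) o)%:E),
      P.-integrable setT (fun o => (Yaw false (W0 o) o)%:E) &
  [/\
      positivity A (fun o => (X o, W o)) /\ positivity A X,
      {ae P, forall o, W o = if A o then W1 o else W0 o} /\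
      {ae P, forall o, Y o = Yaw (A o) (W o) o},
      (forall a a' w,
          cond_indep (fun o => (Yaw a w o, if a' then W1 o else W0 o)) A X),
      (forall a w,
          cond_indep_on [set o | A o = a] (Yaw a w) W X) &
      (forall a a' w,
          cond_indep (Yaw a w) (if a' then W1 else W0) X)]]].

Definition theta_NDE (W0 : Omega -> R) (Yaw : bool -> R -> Omega -> R) : \bar R :=
  (\int[P]_o (Yaw true (W0 o) o - Yaw false (W0 o) o)%:E)%E.

End Defs.

From HB Require Import structures.
From mathcomp Require Import all_boot all_order all_algebra.
From mathcomp Require Import all_classical all_reals all_analysis.
From mathcomp Require Import ring lra.
Set Implicit Arguments. Unset Strict Implicit. Unset Printing Implicit Defensive.
Import Order.TTheory GRing.Theory Num.Theory.
Local Open Scope classical_set_scope.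
Local Open Scope ring_scope.

(* Take n uniform on {0, ..., 7}, read as three fair coins: A is the parity of
   n and the mediator coins B1, B2 are the bits of n./2.  With a trivial
   baseline covariate, potential mediators W^(1) = B1 and W^(0) = B1 B2, and
   Y = A W, the observed law can be explained both by a confounder model
   (Y^(0) = 0, Y^(1) = W, since W is then part of the adjustment set) and by a
   mediator model (Y^(a,w) = a w, where every condition holds because A is
   independent of (B1, B2)).  The first gives theta_ATE = E[W] = 3/8, the second
   theta_NDE = E[W^(0)] = 1/4, so no functional of the observed law can equal
   both. *)

Section uniform_nat.
Context (R : realType).

(* Uniform on the n.+1 points 0, ..., n, so the mass is never 1/0. *)
Definition uniform_nat (n : nat) : set nat -> \bar R :=
  mscale (n.+1%:R^-1)%:nng (msum (fun i => @dirac _ nat i R) n.+1).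

HB.instance Definition _ n := Measure.on (uniform_nat n).

Lemma uniform_natT n : uniform_nat n setT = 1%E.
Proof.
rewrite /uniform_nat /mscale /= /msum.
rewrite (eq_bigr (fun=> 1%:E)); last by move=> *; exact: diracT.
by rewrite sumEFin sumr_const card_ord -EFinM mulVf.
Qed.

HB.instance Definition _ n :=
  Measure_isProbability.Build _ _ _ (uniform_nat n) (uniform_natT n).

Lemma ge0_integral_uniform_nat n (f : nat -> R) : (forall i, 0 <= f i) ->
  (\int[uniform_nat n]_i (f i)%:E = ((\sum_(i < n.+1) f i) / n.+1%:R)%:E)%E.
Proof.
move=> f0.
rewrite ge0_integral_mscale //=; last by move=> *; rewrite lee_fin.
rewrite ge0_integral_measure_sum //=; last by move=> *; rewrite lee_fin.
under eq_bigr do rewrite integral_dirac //= diracE in_setT mul1e.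
by rewrite sumEFin -EFinM mulrC.
Qed.

Lemma integral_uniform_nat n (f : nat -> R) :
  (\int[uniform_nat n]_i (f i)%:E = ((\sum_(i < n.+1) f i) / n.+1%:R)%:E)%E.
Proof.
rewrite integralE funerpos funerneg.
rewrite !ge0_integral_uniform_nat; [|exact: funrneg_ge0|exact: funrpos_ge0].
rewrite -EFinB -mulrBl -sumrB.
congr ((_ / _)%:E); apply: eq_bigr => i _.
by rewrite -[LHS]/((f^\+ - f^\-)%R i) funrposBneg.
Qed.

Lemma integrable_uniform_nat n (f : nat -> R) :
  (uniform_nat n).-integrable setT (fun i => (f i)%:E).
Proof.
apply/integrableP; split; first by move=> _ B _.
under eq_integral do rewrite abse_EFin.
by rewrite integral_uniform_nat ltry.
Qed.

End uniform_nat.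

Lemma measurable_fun_nat d (T : measurableType d) (f : nat -> T) :
  measurable_fun setT f.
Proof. by move=> _ B _. Qed.

Lemma indic_predE (R : realType) (T : Type) (p : pred T) x :
  \1_[set y | p y] x = (p x)%:R :> R.
Proof.
rewrite indicE; have [px|npx] := boolP (p x); first by rewrite mem_set.
by rewrite memNset //=; apply/negP.
Qed.

Lemma indic_itv01 (R : realType) (T : Type) (A : set T) x :
  0 <= (\1_A x : R) <= 1.
Proof. by rewrite indicE; case: (_ \in _); rewrite ?lexx ?ler01. Qed.

Lemma cond_indep_on_comp {R : realType} {d dU dV dZ} {Omega : measurableType d}
    {P : probability Omega R} {TU : measurableType dU} {TV : measurableType dV}
    {TZ : measurableType dZ} {E : set Omega} {U : Omega -> TU} {V : Omega -> TV}
    {Z : Omega -> TZ} (f : TZ -> TU) :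
  measurable_fun setT f -> U =1 f \o Z -> cond_indep_on P E U V Z.
Proof.
move=> mf UE B mB; exists (\1_B \o f); split.
  by apply: measurableT_comp => //; exact: measurable_indic.
split=> [z|C D _ _]; first exact: indic_itv01.
by under eq_integral do rewrite UE.
Qed.

Section counterexample.
Context (R : realType) (dx : measure_display) (TX : measurableType dx).

Local Notation P := (uniform_nat R 7).

Lemma integral_uniform8 (f : nat -> R) : (\int[P]_n (f n)%:E =
  ((f 0 + f 1 + f 2 + f 3 + f 4 + f 5 + f 6 + f 7) / 8)%:E)%E.
Proof. by rewrite integral_uniform_nat !big_ord_recr big_ord0 /= add0r. Qed.

Definition baseline (n : nat) : TX := point.
Definition treatment (n : nat) : bool := odd n.
Definition mediator_of (a : bool) (k : nat) : R :=
  if odd k && (a || odd k./2) then 1 else 0.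
Definition mediator1 (n : nat) : R := mediator_of true n./2.
Definition mediator0 (n : nat) : R := mediator_of false n./2.
Definition mediator (n : nat) : R :=
  if treatment n then mediator1 n else mediator0 n.
Definition outcome_aw (a : bool) (w : R) (n : nat) : R := if a then w else 0.
Definition outcome (n : nat) : R := outcome_aw (treatment n) (mediator n) n.

Lemma theta_ATE_example : theta_ATE P (fun _ => 0) mediator = (3 / 8)%:E.
Proof.
rewrite /theta_ATE integral_uniform8.
rewrite /mediator /mediator1 /mediator0 /mediator_of /=.
by congr EFin; lra.
Qed.

Lemma theta_NDE_example : theta_NDE P mediator0 outcome_aw = (1 / 4)%:E.
Proof.
rewrite /theta_NDE integral_uniform8 /outcome_aw /mediator0 /mediator_of /=.
by congr EFin; lra.
Qed.

Lemma positivity_given_mediator :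
  positivity P treatment (fun n => (baseline n, mediator n)).
Proof.
(* P(A = 1 | W = 1) = 2/3 and P(A = 1 | W = 0) = 2/5, and W is 0/1-valued. *)
exists (fun z => 2 / 5 + 4 / 15 * z.2); split.
  apply: measurable_realfun.measurable_funD => //.
  by apply: measurable_realfun.measurable_funM => //; exact: measurable_snd.
split=> [D _|].
  rewrite !integral_uniform8 !indic_predE.
  rewrite /baseline /mediator /mediator1 /mediator0 /mediator_of /=.
  by congr EFin; lra.
apply: aeW => n /=; rewrite /mediator /mediator1 /mediator0 /mediator_of.
by case: ifP; case: ifP => _ _; apply/andP; split; lra.
Qed.

Lemma positivity_given_baseline : positivity P treatment baseline.
Proof.
exists (fun _ => 1 / 2); split; first exact: measurable_cst.
split=> [D _|]; last by apply: aeW => n /=; apply/andP; split; lra.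
rewrite !integral_uniform8 !indic_predE /=.
by congr EFin; lra.
Qed.

Lemma cond_indep_half dU (TU : measurableType dU) (U f : nat -> TU) :
  U =1 f \o half -> cond_indep P U treatment baseline.
Proof.
move=> UE B _.
exists (fun _ => (\1_B (f 0) + \1_B (f 1) + \1_B (f 2) + \1_B (f 3)) / 4).
split; first exact: measurable_cst.
split=> [_|C D _ _].
  have B01 k : 0 <= (\1_B (f k) : R) <= 1 by exact: indic_itv01.
  move: (B01 0) (B01 1) (B01 2) (B01 3).
  move=> /andP[? ?] /andP[? ?] /andP[? ?] /andP[? ?].
  by apply/andP; split; lra.
rewrite !integral_uniform8 !UE !indicT /=.
by congr EFin; field.
Qed.

Lemma confounder_model_example :
  confounder_model P baseline treatment mediator outcome (fun _ => 0) mediator.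
Proof.
split; try exact: measurable_fun_nat.
split; try exact: integrable_uniform_nat.
- exact: positivity_given_mediator.
- exact: aeW.
- split; first by apply: (cond_indep_on_comp (f := cst (0 : R))).
  by apply: (cond_indep_on_comp (f := snd)) => //; exact: measurable_snd.
Qed.

Lemma mediator_model_example :
  mediator_model P baseline treatment mediator outcome
    mediator0 mediator1 outcome_aw.
Proof.
split; try exact: measurable_fun_nat.
split; try exact: integrable_uniform_nat.
- by split; exact: measurable_fun_nat.
- by move=> a w; exact: measurable_fun_nat.
split.
- by split; [exact: positivity_given_mediator|exact: positivity_given_baseline].
- by split; exact: aeW.
- move=> a a' w.
  apply: (cond_indep_half (f := fun k => (outcome_aw a w k, mediator_of a' k))).
  by case: a'.
- move=> a w.
  by apply: (cond_indep_on_comp (f := cst (outcome_aw a w 0))).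
- move=> a a' w.
  by apply: (cond_indep_on_comp (f := cst (outcome_aw a w 0))).
Qed.

Definition observed (n : nat) : TX * bool * R * R :=
  (baseline n, treatment n, mediator n, outcome n).

HB.instance Definition _ :=
  isMeasurableFun.Build _ _ _ _ observed (measurable_fun_nat observed).

Lemma law_of_observed :
  law_of_obs P (distribution P observed) baseline treatment mediator outcome.
Proof. by []. Qed.

End counterexample.

Theorem theorem1 (R : realType) (dx : measure_display) (TX : measurableType dx) :
  ~ exists T : probability (TX * bool * R * R)%type R -> R,
    (forall (d : measure_display) (Omega : measurableType d)
            (P : probability Omega R)
            (X : Omega -> TX) (A : Omega -> bool) (W Y Y0 Y1 : Omega -> R)
            (Q : probability (TX * bool * R * R)%type R),
        confounder_model P X A W Y Y0 Y1 -> law_of_obs P Q X A W Y ->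
        (T Q)%:E = theta_ATE P Y0 Y1) /\
    (forall (d : measure_display) (Omega : measurableType d)
            (P : probability Omega R)
            (X : Omega -> TX) (A : Omega -> bool) (W Y W0 W1 : Omega -> R)
            (Yaw : bool -> R -> Omega -> R)
            (Q : probability (TX * bool * R * R)%type R),
        mediator_model P X A W Y W0 W1 Yaw -> law_of_obs P Q X A W Y ->
        (T Q)%:E = theta_NDE P W0 Yaw).
Proof.
case=> T [T_ATE T_NDE].
have law := @law_of_observed R _ TX.
have := T_ATE _ _ _ _ _ _ _ _ _ _ (@confounder_model_example R _ TX) law.
have := T_NDE _ _ _ _ _ _ _ _ _ _ _ (@mediator_model_example R _ TX) law.
rewrite theta_ATE_example theta_NDE_example => -> [].
lra.
Qed.
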